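(* Let $P_{Y|X}$ be a channel on finite alphabets and $\psi:\mathbb R_+\to\mathbb R_+$ a convex function with $F_I(t,P_{Y|X})\le t-\psi(t)$ for all $t\ge0$. For a finite-valued $W$ and encoder functions $f_j$, let $P_{Y^n|W}(y^n|w)=\prod_{j=1}^nP_{Y|X}(y_j|f_j(w,y^{j-1}))$. Then for all $t\ge0$, $$F_I(t,P_{Y^n|W})\le t-\psi^{(n)}(t),$$ where $\psi^{(1)}=\psi$ and $\psi^{(k+1)}=\psi^{(k)}\circ\psi$.
   Context: For a channel $P_{B|A}$, $F_I(t,P_{B|A})=\sup\{I(U;B): I(U;A)\le t,\ P_{UAB}=P_{UA}P_{B|A}\}$. *)

From mathcomp Require Import all_boot.
From Stdlib Require Import Reals.
Set Implicit Arguments. Unset Strict Implicit. Unset Printing Implicit Defensive.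

Open Scope R_scope.

Definition rsum (T : finType) (f : T -> R) : R := \big[Rplus/R0]_(x : T) f x.

Definition is_pmf (T : finType) (p : T -> R) : Prop :=
  (forall x, 0 <= p x) /\ rsum p = 1.

Definition is_channel (A B : finType) (K : A -> B -> R) : Prop :=
  forall a, is_pmf (K a).

Definition marg1 (X Y : finType) (q : X -> Y -> R) (x : X) : R := rsum (q x).
Definition marg2 (X Y : finType) (q : X -> Y -> R) (y : Y) : R :=
  rsum (fun x => q x y).
Definition mutinfo (X Y : finType) (q : X -> Y -> R) : R :=
  rsum (fun x => rsum (fun y =>
    if Rlt_dec 0 (q x y)
    then q x y * ln (q x y / (marg1 q x * marg2 q y))
    else 0)).

(* Joint law of (U,B) when P_{UAB} = P_{UA} P_{B|A}. *)
Definition through (U A B : finType) (pUA : U -> A -> R) (K : A -> B -> R)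
  (u : U) (b : B) : R := rsum (fun a => pUA u a * K a b).

Definition FI_set (A B : finType) (K : A -> B -> R) (t : R) (v : R) : Prop :=
  exists (U : finType) (pUA : U -> A -> R),
    is_pmf (fun ua : U * A => pUA ua.1 ua.2) /\
    mutinfo pUA <= t /\ v = mutinfo (through pUA K).

(* F_I(t, K) <= c, i.e. sup FI_set K t <= c (c is an upper bound). *)
Definition FI_le (A B : finType) (K : A -> B -> R) (t c : R) : Prop :=
  forall v, FI_set K t v -> v <= c.

Definition convex_on_nonneg (psi : R -> R) : Prop :=
  forall x y l, 0 <= x -> 0 <= y -> 0 <= l <= 1 ->
    psi (l * x + (1 - l) * y) <= l * psi x + (1 - l) * psi y.

(* The channel P_{Y^n|W} induced by encoders f_j(w, y^{j-1}):
   P(y^n | w) = prod_j P_{Y|X}(y_j | f_j(w, y^{j-1})).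
   Here y^{j-1} is the prefix [take j y] (indices 0-based). *)
Definition feedback_channel (X Y W : finType) (n : nat) (K : X -> Y -> R)
  (f : 'I_n -> W -> seq Y -> X) (w : W) (y : n.-tuple Y) : R :=
  \big[Rmult/R1]_(j < n) K (f j w (take j y)) (tnth y j).

(* The bound is established one channel use at a time. Let [Z] be the outputs so far
   and [U] satisfy [I(U;W) <= t]. By the chain rule, [I(U; Z, Y)] is [I(U;Z)] plus the average over
   [z] of [I(U; Y | Z = z)]. Given [Z = z] the channel input is a function of [W], so data
   processing and the hypothesis on [K] bound that term by [x_z - psi x_z], where [x_z] is
   [I(U;W | Z = z)] plus the slack [t - I(U;W)]; these budgets average to [t - I(U;Z)]. Jensen's
   inequality for the convex [psi] then gives [I(U; Z, Y) <= t - psi (t - I(U;Z))], and since [psi]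
   is nondecreasing (convex, nonnegative, [psi 0 = 0]) induction on the number of uses yields
   [t - psi^(n) t]. *)

From HB Require Import structures.
From mathcomp Require Import all_boot.
From Stdlib Require Import Reals Lra FunctionalExtensionality.
Set Implicit Arguments. Unset Strict Implicit. Unset Printing Implicit Defensive.
Open Scope R_scope.

HB.instance Definition _ := Monoid.isComLaw.Build R R0 Rplus
  (fun x y z => esym (Rplus_assoc x y z)) Rplus_comm Rplus_0_l.
HB.instance Definition _ := Monoid.isComLaw.Build R R1 Rmult
  (fun x y z => esym (Rmult_assoc x y z)) Rmult_comm Rmult_1_l.
HB.instance Definition _ := Monoid.isMulLaw.Build R R0 Rmult Rmult_0_l Rmult_0_r.
HB.instance Definition _ :=
  Monoid.isAddLaw.Build R Rmult Rplus Rmult_plus_distr_r Rmult_plus_distr_l.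

(** * Finite sums of reals *)

Section RealSums.
Variable I : Type.
Implicit Types (r : seq I) (P : pred I) (F G : I -> R).

Lemma sumR_ge0 r P F :
  (forall i, P i -> 0 <= F i) -> 0 <= \big[Rplus/R0]_(i <- r | P i) F i.
Proof. by move=> F0; apply: big_ind => // *; lra. Qed.

Lemma sumR_le r P F G : (forall i, P i -> F i <= G i) ->
  \big[Rplus/R0]_(i <- r | P i) F i <= \big[Rplus/R0]_(i <- r | P i) G i.
Proof. by move=> FG; apply: big_ind2 => // *; lra. Qed.

Lemma sumR_mulr r P F a :
  \big[Rplus/R0]_(i <- r | P i) F i * a = \big[Rplus/R0]_(i <- r | P i) (F i * a).
Proof. exact: big_distrl. Qed.

Lemma sumR_mull r P F a :
  a * \big[Rplus/R0]_(i <- r | P i) F i = \big[Rplus/R0]_(i <- r | P i) (a * F i).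
Proof. exact: big_distrr. Qed.
End RealSums.

Section FiniteRealSums.
Variables (I : finType) (P : pred I) (F : I -> R).
Hypothesis F_ge0 : forall i, 0 <= F i.

Lemma sumR_ge_term j : P j -> F j <= \big[Rplus/R0]_(i | P i) F i.
Proof.
move=> Pj; rewrite (bigD1 j) //=.
have : 0 <= \big[Rplus/R0]_(i | P i && (i != j)) F i by apply: sumR_ge0.
lra.
Qed.

Lemma sumR_eq0_term j : \big[Rplus/R0]_(i | P i) F i = 0 -> P j -> F j = 0.
Proof. by move=> S0 Pj; have := sumR_ge_term Pj; have := F_ge0 j; lra. Qed.
End FiniteRealSums.

Lemma sumR_pair (A B : finType) (F : A * B -> R) :
  \big[Rplus/R0]_(v : A * B) F v = \big[Rplus/R0]_(a : A) \big[Rplus/R0]_(b : B) F (a, b).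
Proof. by rewrite pair_bigA; apply: eq_bigr => -[]. Qed.

Lemma Rinv_ge0 x : 0 <= x -> 0 <= / x.
Proof.
case: (Req_dec x 0) => [->|x0] x_ge0; first by rewrite Rinv_0; lra.
by left; apply: Rinv_0_lt_compat; lra.
Qed.

(** * Relative-entropy terms and mutual information *)

Definition kl_term (a b : R) : R := if Rlt_dec 0 a then a * ln (a / b) else 0.

Lemma kl_termE a b : 0 < a -> kl_term a b = a * ln (a / b).
Proof. by rewrite /kl_term; case: Rlt_dec. Qed.

Lemma kl_term_eq0 a b : a <= 0 -> kl_term a b = 0.
Proof. by rewrite /kl_term; case: Rlt_dec => // *; lra. Qed.

Lemma kl_term0 b : kl_term 0 b = 0.
Proof. exact/kl_term_eq0/Rle_refl. Qed.

Lemma kl_term_scale a b c : 0 <= c -> kl_term (a * c) (b * c) = c * kl_term a b.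
Proof.
case=> [c0|<-]; last by rewrite Rmult_0_r kl_term0; ring.
rewrite /kl_term; case: Rlt_dec => ac; case: Rlt_dec => a0 /=; try nra.
have -> : a * c / (b * c) = a / b * (c * / c) by rewrite /Rdiv Rinv_mult; ring.
rewrite Rinv_r ?Rmult_1_r; [ring | lra].
Qed.

(* [ln y <= y - 1] at [y = b k / a]. *)
Lemma kl_term_ge_tangent a b k : 0 <= a -> 0 <= b -> (0 < a -> 0 < b) -> 0 < k ->
  a * (ln k + 1) + b * - k <= kl_term a b.
Proof.
move=> a0 b0 ab k0; case: (Rle_lt_dec a 0) => [a_le0|a_gt0].
  by rewrite kl_term_eq0 // (_ : a = 0); nra.
have b_gt0 := ab a_gt0; rewrite kl_termE //.
have y0 : 0 < b * k / a by apply: Rdiv_lt_0_compat => //; nra.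
have -> : a / b = k * / (b * k / a) by field; lra.
rewrite ln_mult ?ln_Rinv //; last exact: Rinv_0_lt_compat.
have := exp_ineq1_le (ln (b * k / a)); rewrite exp_ln // => ln_le.
have : a * ln (b * k / a) <= a * (b * k / a - 1) by apply: Rmult_le_compat_l; lra.
have -> : a * (b * k / a - 1) = b * k - a by field; lra.
lra.
Qed.

Lemma kl_term_chain a q m n c : 0 < a -> 0 < q -> q <= m -> q <= n -> a <= c ->
  kl_term a (m * c) = a * ln (q / (m * n)) + kl_term a (q * c / n).
Proof.
move=> a0 q0 qm qn ac; rewrite !kl_termE //.
have -> : a / (m * c) = q / (m * n) * (a / (q * c / n)) by field; repeat split; lra.
rewrite ln_mult; first ring.
- by apply: Rdiv_lt_0_compat; nra.
- by apply: Rdiv_lt_0_compat => //; apply: Rdiv_lt_0_compat; nra.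
Qed.

Lemma log_sum_ineq (I : finType) (P : pred I) (a b : I -> R) :
  (forall i, 0 <= a i) -> (forall i, 0 <= b i) -> (forall i, 0 < a i -> 0 < b i) ->
  kl_term (\big[Rplus/R0]_(i | P i) a i) (\big[Rplus/R0]_(i | P i) b i)
  <= \big[Rplus/R0]_(i | P i) kl_term (a i) (b i).
Proof.
move=> a0 b0 ab.
set A := \big[Rplus/R0]_(i | P i) a i; set B := \big[Rplus/R0]_(i | P i) b i.
have A0 : 0 <= A by apply: sumR_ge0.
have B0 : 0 <= B by apply: sumR_ge0.
case: (Rle_lt_dec A 0) => [A_le0|A_gt0].
  rewrite kl_term_eq0 // big1 => [|i Pi]; first exact: Rle_refl.
  by rewrite (sumR_eq0_term a0 (_ : A = 0)) ?kl_term0 //; lra.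
have B_gt0 : 0 < B.
  case: (Rle_lt_dec B 0) => // B_le0.
  suff : A <= \big[Rplus/R0]_(i | P i) 0 by rewrite big1_eq; lra.
  apply: sumR_le => i Pi.
  have : b i = 0 by apply: (sumR_eq0_term b0 _ Pi); rewrite -/B; lra.
  by case: (Rle_lt_dec (a i) 0) => // /ab; lra.
have k0 : 0 < A / B by apply: Rdiv_lt_0_compat.
apply: Rle_trans (sumR_le _ (fun i _ => kl_term_ge_tangent (a0 i) (b0 i) (@ab i) k0)).
rewrite big_split /= -!sumR_mulr -/A -/B kl_termE //.
have -> : B * - (A / B) = - A by field; lra.
lra.
Qed.

Lemma mutinfoE (A B : finType) (q : A -> B -> R) :
  mutinfo q = rsum (fun a => rsum (fun b => kl_term (q a b) (marg1 q a * marg2 q b))).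
Proof. by []. Qed.

Definition mass (A B : finType) (s : A -> B -> R) : R := rsum (marg1 s).

(* [mass s] times the mutual information of [s / mass s], still meaningful when [mass s = 0]:
   the form in which conditional terms [P(Z = z) I(U;Y | Z = z)] appear. *)
Definition umutinfo (A B : finType) (s : A -> B -> R) : R :=
  rsum (fun a => rsum (fun b => kl_term (s a b) (marg1 s a * marg2 s b / mass s))).

Section UnnormalizedInformation.
Variables A B : finType.
Variable s : A -> B -> R.
Hypothesis s_ge0 : forall a b, 0 <= s a b.

Lemma marg1_ge0 a : 0 <= marg1 s a. Proof. exact: sumR_ge0. Qed.
Lemma marg2_ge0 b : 0 <= marg2 s b. Proof. exact: sumR_ge0. Qed.
Lemma mass_ge0 : 0 <= mass s. Proof. by apply: sumR_ge0 => a _; apply: marg1_ge0. Qed.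

Lemma mass_marg2 : mass s = rsum (marg2 s).
Proof. exact: exchange_big. Qed.

Lemma prod_marg_ge0 a b : 0 <= marg1 s a * marg2 s b / mass s.
Proof.
apply: Rmult_le_pos; last exact/Rinv_ge0/mass_ge0.
exact: Rmult_le_pos (marg1_ge0 a) (marg2_ge0 b).
Qed.

Lemma prod_marg_gt0 a b : 0 < s a b -> 0 < marg1 s a * marg2 s b / mass s.
Proof.
move=> sab; have s_le1 : s a b <= marg1 s a by apply: sumR_ge_term.
have s_le2 : s a b <= marg2 s b by apply: (sumR_ge_term (F := s^~ b)).
have : marg1 s a <= mass s by apply: (sumR_ge_term (F := marg1 s) marg1_ge0).
by move=> m1_le; apply: Rdiv_lt_0_compat; nra.
Qed.

Lemma entry_eq0 a b : mass s = 0 -> s a b = 0.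
Proof.
move=> T0; apply: (sumR_eq0_term (P := xpredT) (F := s a) (s_ge0 a) _ isT).
exact: (sumR_eq0_term (P := xpredT) (F := marg1 s) marg1_ge0 T0 isT).
Qed.

Lemma umutinfo_mass0 : mass s = 0 -> umutinfo s = 0.
Proof.
move=> T0; rewrite /umutinfo /rsum big1 // => a _; rewrite big1 // => b _.
by rewrite entry_eq0 // kl_term0.
Qed.

Lemma umutinfo_ge0 : 0 <= umutinfo s.
Proof.
rewrite /umutinfo /rsum
  -(sumR_pair (fun v => kl_term (s v.1 v.2) (marg1 s v.1 * marg2 s v.2 / mass s))).
apply: Rle_trans (log_sum_ineq xpredT (fun v => s_ge0 v.1 v.2)
  (fun v => prod_marg_ge0 v.1 v.2) (fun v => @prod_marg_gt0 v.1 v.2)).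
rewrite (sumR_pair (fun v => s v.1 v.2)) (_ : \big[Rplus/R0]_a _ = mass s) //.
rewrite (sumR_pair (fun v => marg1 s v.1 * marg2 s v.2 / mass s)) /=.
have -> : \big[Rplus/R0]_a \big[Rplus/R0]_b (marg1 s a * marg2 s b / mass s) =
          mass s * rsum (marg2 s) / mass s.
  rewrite /Rdiv /rsum sumR_mulr sumR_mulr; apply: eq_bigr => a _.
  by rewrite sumR_mull sumR_mulr.
rewrite -mass_marg2; case: (Rle_lt_dec (mass s) 0) => [T_le0|T_gt0].
  by rewrite kl_term_eq0 //; apply: Rle_refl.
have -> : mass s * mass s / mass s = mass s by field; lra.
by rewrite kl_termE // /Rdiv Rinv_r ?ln_1; lra.
Qed.

Lemma mutinfo_normalize : mutinfo (fun a b => s a b / mass s) = umutinfo s / mass s.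
Proof.
rewrite mutinfoE /umutinfo /Rdiv {3}/rsum sumR_mulr; apply: eq_bigr => a _.
rewrite /rsum sumR_mulr; apply: eq_bigr => b _.
have -> : marg1 (fun a b => s a b * / mass s) a = marg1 s a * / mass s.
  by rewrite /marg1 /rsum sumR_mulr.
have -> : marg2 (fun a b => s a b * / mass s) b = marg2 s b * / mass s.
  by rewrite /marg2 /rsum sumR_mulr.
have -> : marg1 s a * / mass s * (marg2 s b * / mass s) =
          marg1 s a * marg2 s b * / mass s * / mass s by ring.
by rewrite kl_term_scale; [rewrite Rmult_comm | apply/Rinv_ge0/mass_ge0].
Qed.

Lemma umutinfo_push_le (C : finType) (g : B -> C) :
  umutinfo (fun a c => \big[Rplus/R0]_(b | g b == c) s a b) <= umutinfo s.
Proof.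
set r := fun a c => _.
have marg1_r a : marg1 r a = marg1 s a.
  by rewrite /marg1 /rsum /r [RHS](partition_big g predT).
have marg2_r c : marg2 r c = \big[Rplus/R0]_(b | g b == c) marg2 s b.
  by rewrite /marg2 /rsum /r exchange_big.
have mass_r : mass r = mass s by apply: eq_bigr => a _; exact: marg1_r.
rewrite /umutinfo mass_r /rsum; apply: sumR_le => a _.
rewrite [X in _ <= X](partition_big g predT) //; apply: sumR_le => c _.
rewrite marg1_r marg2_r /Rdiv sumR_mull sumR_mulr.
by apply: log_sum_ineq => [b | b | b /prod_marg_gt0]; [exact: s_ge0 | exact: prod_marg_ge0 |].
Qed.
End UnnormalizedInformation.

Lemma mutinfo_chain (U Z Y : finType) (q2 : U -> Z * Y -> R) (q : U -> Z -> R) :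
  (forall u v, 0 <= q2 u v) -> (forall u z, rsum (fun y => q2 u (z, y)) = q u z) ->
  mutinfo q2 = mutinfo q + rsum (fun z => umutinfo (fun u y => q2 u (z, y))).
Proof.
move=> q2_ge0 q_sum.
have q_ge0 u z : 0 <= q u z by rewrite -q_sum; apply: sumR_ge0 => y _.
have marg1_q2 u : marg1 q2 u = marg1 q u.
  by rewrite /marg1 /rsum sumR_pair; apply: eq_bigr => z _; apply: q_sum.
have mass_slice z : mass (fun u y => q2 u (z, y)) = marg2 q z.
  by apply: eq_bigr => u _; apply: q_sum.
rewrite !mutinfoE /umutinfo /rsum [X in _ = _ + X]exchange_big -big_split /=.
apply: eq_bigr => u _; rewrite sumR_pair -big_split /=; apply: eq_bigr => z _.
rewrite marg1_q2 mass_slice (q_sum u z : marg1 (fun u y => q2 u (z, y)) u = _) /marg2 /=.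
set M := marg1 q u; set Zm := rsum (fun u' => q u' z).
have [q_le_M q_le_Zm] : q u z <= M /\ q u z <= Zm.
  by split; [apply: (sumR_ge_term (F := q u)) | apply: (sumR_ge_term (F := q^~ z))].
case: (Rle_lt_dec (q u z) 0) => [q_le0|q_gt0].
  have Q0 y : q2 u (z, y) = 0.
    apply: (sumR_eq0_term (P := xpredT) (F := fun y => q2 u (z, y))) => //.
    by rewrite -/(rsum _) q_sum; have := q_ge0 u z; lra.
  by rewrite kl_term_eq0 // Rplus_0_l; apply: eq_bigr => y _; rewrite Q0 !kl_term0.
rewrite kl_termE // -{1}(q_sum u z) /rsum sumR_mulr -big_split /=; apply: eq_bigr => y _.
have Q_le_C : q2 u (z, y) <= \big[Rplus/R0]_u' q2 u' (z, y).
  exact: (sumR_ge_term (F := fun u' => q2 u' (z, y))).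
case: (Rle_lt_dec (q2 u (z, y)) 0) => [Q_le0|Q_gt0]; last exact: kl_term_chain.
by rewrite (_ : q2 u (z, y) = 0) ?kl_term0; [ring | have := q2_ge0 u (z, y); lra].
Qed.

Section Channels.
Variables (A B : finType) (k : A -> B -> R).
Hypothesis k_channel : is_channel k.

Lemma channel_ge0 a b : 0 <= k a b. Proof. by case: (k_channel a). Qed.
Lemma channel_sum1 a : \big[Rplus/R0]_b k a b = 1. Proof. by case: (k_channel a). Qed.
End Channels.

Lemma mutinfo_markov (U W Z : finType) (p : U -> W -> R) (c : W -> Z -> R) :
  (forall u w, 0 <= p u w) -> is_channel c ->
  mutinfo p = mutinfo (through p c) + rsum (fun z => umutinfo (fun u w => p u w * c w z)).
Proof.
move=> p_ge0 c_ch.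
rewrite -(@mutinfo_chain _ _ _ (fun u zw => p u zw.2 * c zw.2 zw.1)) //; last first.
  by move=> u [z w]; apply/Rmult_le_pos/channel_ge0.
rewrite !mutinfoE; apply: eq_bigr => u _.
have -> : marg1 (fun u zw => p u zw.2 * c zw.2 zw.1) u = marg1 p u.
  rewrite /marg1 /rsum sumR_pair exchange_big; apply: eq_bigr => w _.
  by rewrite /= -sumR_mull (channel_sum1 c_ch) Rmult_1_r.
rewrite /rsum sumR_pair exchange_big; apply: eq_bigr => w _.
under eq_bigr => z _.
  have -> : marg2 (fun u zw => p u zw.2 * c zw.2 zw.1) (z, w) = marg2 p w * c w z.
    by rewrite /marg2 /rsum sumR_mulr.
  rewrite -Rmult_assoc kl_term_scale; last exact: channel_ge0.
  over.
by rewrite /= -sumR_mulr (channel_sum1 c_ch) Rmult_1_l.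
Qed.

Section Through.
Variables U A B : finType.
Variables (s : U -> A -> R) (k : A -> B -> R).
Hypotheses (s_ge0 : forall u a, 0 <= s u a) (k_channel : is_channel k).

Lemma through_ge0 u b : 0 <= through s k u b.
Proof. by apply: sumR_ge0 => a _; exact/Rmult_le_pos/channel_ge0. Qed.

Lemma mass_through : mass (through s k) = mass s.
Proof.
apply: eq_bigr => u _; rewrite /marg1 /through /rsum exchange_big; apply: eq_bigr => a _.
by rewrite -sumR_mull channel_sum1 // Rmult_1_r.
Qed.
End Through.

Lemma is_pmf_normalize (A B : finType) (s : A -> B -> R) :
  (forall a b, 0 <= s a b) -> 0 < mass s -> is_pmf (fun v : A * B => s v.1 v.2 / mass s).
Proof.
move=> s_ge0 T_gt0; split=> [[a b]|].
  by apply: Rmult_le_pos; [apply: s_ge0 | apply: Rinv_ge0; lra].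
rewrite /rsum sumR_pair /Rdiv; under eq_bigr do rewrite -sumR_mulr.
rewrite -sumR_mulr.
by change (mass s * / mass s = 1); rewrite Rinv_r //; lra.
Qed.

Lemma mutinfo_indep (A B : finType) (al : A -> R) (be : B -> R) :
  is_pmf al -> is_pmf be -> mutinfo (fun a b => al a * be b) = 0.
Proof.
move=> [al0 al1] [be0 be1]; rewrite mutinfoE /rsum big1 // => a _; rewrite big1 // => b _.
rewrite /marg1 /marg2 /rsum -sumR_mull -sumR_mulr.
rewrite (_ : \big[Rplus/R0]_b be b = 1) // (_ : \big[Rplus/R0]_a al a = 1) //.
case: (Rle_lt_dec (al a * be b) 0) => [ab_le0|ab_gt0]; first exact: kl_term_eq0.
by rewrite kl_termE // Rmult_1_r Rmult_1_l /Rdiv Rinv_r ?ln_1 ?Rmult_0_r //; lra.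
Qed.

Lemma is_pmf_prod (A B : finType) (al : A -> R) (be : B -> R) :
  is_pmf al -> is_pmf be -> is_pmf (fun v : A * B => al v.1 * be v.2).
Proof.
move=> [al0 al1] [be0 be1]; split=> [[a b]|]; first exact: Rmult_le_pos.
rewrite /rsum sumR_pair -[RHS]al1; apply: eq_bigr => a _.
by rewrite /= -sumR_mull (_ : \big[Rplus/R0]_b be b = 1) // Rmult_1_r.
Qed.

Lemma is_pmf_dirac (A : finType) (a0 : A) : is_pmf (fun a => if a == a0 then 1 else 0).
Proof.
split=> [a|]; first by case: eqP => _; lra.
rewrite /rsum (bigD1 a0) //= eqxx big1 => [|a /negbTE -> //]; lra.
Qed.

Lemma FI_set0 (X Y : finType) (K : X -> Y -> R) (x0 : X) t :
  is_channel K -> 0 <= t -> FI_set K t 0.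
Proof.
move=> K_channel t0; pose d x := if x == x0 then 1 else 0.
have d_pmf : is_pmf d := is_pmf_dirac x0.
exists X, (fun u x => d u * d x); split; [exact: is_pmf_prod | split].
  by rewrite mutinfo_indep.
rewrite (_ : through _ K = fun u y => d u * K x0 y) ?mutinfo_indep //.
apply: functional_extensionality => u; apply: functional_extensionality => y.
rewrite /through /rsum (bigD1 x0) //= big1 /d ?eqxx => [|x /negbTE ->]; ring.
Qed.

(** * Convexity *)

Section Jensen.
Variable psi : R -> R.
Hypothesis psi_ge0 : forall t, 0 <= t -> 0 <= psi t.
Hypothesis psi_convex : convex_on_nonneg psi.

Lemma convex_weighted a b x y : 0 <= a -> 0 <= b -> 0 < a + b -> 0 <= x -> 0 <= y ->
  (a + b) * psi ((a * x + b * y) / (a + b)) <= a * psi x + b * psi y.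
Proof.
move=> a0 b0 ab0 x0 y0; set l := a / (a + b).
have l01 : 0 <= l <= 1.
  have : 0 <= b / (a + b) by apply/Rmult_le_pos/Rinv_ge0; lra.
  have : 0 <= l by apply/Rmult_le_pos/Rinv_ge0; lra.
  have : 1 - l = b / (a + b) by rewrite /l; field; lra.
  lra.
have -> : (a * x + b * y) / (a + b) = l * x + (1 - l) * y by rewrite /l; field; lra.
have := Rmult_le_compat_l (a + b) _ _ (Rlt_le _ _ ab0) (psi_convex x0 y0 l01).
have -> : (a + b) * (l * psi x + (1 - l) * psi y) = a * psi x + b * psi y.
  by rewrite /l; field; lra.
by [].
Qed.

(* The implication [S = 0 -> M = 0] is carried along the induction to absorb zero weights. *)
Lemma jensen_seq (I : Type) (r : seq I) (w x : I -> R) :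
  (forall i, 0 <= w i) -> (forall i, 0 <= x i) ->
  let S := \big[Rplus/R0]_(i <- r) w i in
  let M := \big[Rplus/R0]_(i <- r) (w i * x i) in
  (S = 0 -> M = 0) /\ S * psi (M / S) <= \big[Rplus/R0]_(i <- r) (w i * psi (x i)).
Proof.
move=> w0 x0; elim: r => [|i r [SM IH]] /=.
  by rewrite !big_nil; split=> //; lra.
rewrite !big_cons.
set S := \big[Rplus/R0]_(j <- r) w j in SM IH *.
set M := \big[Rplus/R0]_(j <- r) (w j * x j) in SM IH *.
set Sp := \big[Rplus/R0]_(j <- r) (w j * psi (x j)) in IH *.
have S0 : 0 <= S by apply: sumR_ge0.
have M0 : 0 <= M by apply: sumR_ge0 => j _; apply: Rmult_le_pos.
have Sp0 : 0 <= Sp by apply: sumR_ge0 => j _; apply/Rmult_le_pos/psi_ge0.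
have wi := w0 i; have xi := x0 i; have psi_xi := psi_ge0 xi.
split=> [wS0|]; first by rewrite SM; nra.
case: (Req_dec (w i + S) 0) => [->|wS0]; first by rewrite Rmult_0_l; nra.
case: (Req_dec S 0) => [S_eq0|S_neq0].
  rewrite S_eq0 SM // !Rplus_0_r (_ : w i * x i / w i = x i); first lra.
  by field; lra.
have M_eq : M = S * (M / S) by field.
rewrite {1}M_eq; apply: Rle_trans (convex_weighted _ _ _ _ _) _; try lra.
exact/Rmult_le_pos/Rinv_ge0.
Qed.

Lemma jensen (I : finType) (w x : I -> R) :
  (forall i, 0 <= w i) -> (forall i, 0 <= x i) -> rsum w = 1 ->
  psi (rsum (fun i => w i * x i)) <= rsum (fun i => w i * psi (x i)).
Proof.
move=> w0 x0 w1; have [_] := jensen_seq (index_enum I) w0 x0.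
by rewrite -/(rsum w) w1 Rmult_1_l Rdiv_1_r.
Qed.
End Jensen.

Lemma convex_nondecreasing (psi : R -> R) :
  (forall t, 0 <= t -> 0 <= psi t) -> psi 0 = 0 -> convex_on_nonneg psi ->
  forall x y, 0 <= x -> x <= y -> psi x <= psi y.
Proof.
move=> psi_ge0 psi0 psi_convex x y x0 xy.
case: (Req_dec y 0) => [y0|y_neq0]; first by rewrite (_ : x = y) //; lra.
have l01 : 0 <= x / y <= 1.
  have : 0 <= (y - x) / y by apply/Rmult_le_pos/Rinv_ge0; lra.
  have : 1 - x / y = (y - x) / y by field.
  have : 0 <= x / y by apply/Rmult_le_pos/Rinv_ge0; lra.
  lra.
have := psi_convex y 0 (x / y) ltac:(lra) (Rle_refl 0) l01.
rewrite psi0 (_ : x / y * y + (1 - x / y) * 0 = x); last by field.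
have := psi_ge0 y ltac:(lra); nra.
Qed.

Lemma iter_ge0 (psi : R -> R) t j :
  (forall t, 0 <= t -> 0 <= psi t) -> 0 <= t -> 0 <= iter j psi t.
Proof. by move=> psi_ge0 t0; elim: j => //= j; apply: psi_ge0. Qed.

(** * One more use of the channel *)

Section SingleUse.
Variables (X Y : finType) (K : X -> Y -> R) (psi : R -> R).
Hypothesis K_channel : is_channel K.
Hypothesis K_FI : forall t, 0 <= t -> FI_le K t (t - psi t).

Lemma umutinfo_channel_le (U : finType) (r : U -> X -> R) x :
  (forall u a, 0 <= r u a) -> 0 <= x -> umutinfo r <= mass r * x ->
  umutinfo (through r K) <= mass r * (x - psi x).
Proof.
move=> r_ge0 x0 r_le.
have mass_rK := mass_through r K_channel.
have rK_ge0 := through_ge0 r_ge0 K_channel.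
case: (Rle_lt_dec (mass r) 0) => [T_le0|T_gt0].
  have T0 : mass r = 0 by have := mass_ge0 r_ge0; lra.
  by rewrite umutinfo_mass0 ?mass_rK // T0; lra.
pose q u a := r u a / mass r.
have q_le : mutinfo q <= x.
  rewrite /q mutinfo_normalize //.
  have : mass r * (umutinfo r / mass r) = umutinfo r by field; lra.
  nra.
have := K_FI x0 (ex_intro _ U (ex_intro _ q (conj (is_pmf_normalize r_ge0 T_gt0)
  (conj q_le erefl)))).
have -> : through q K = fun u y => through r K u y / mass (through r K).
  apply: functional_extensionality => u; apply: functional_extensionality => y.
  by rewrite mass_rK /through /q /rsum /Rdiv sumR_mulr; apply: eq_bigr => a _; ring.
rewrite mutinfo_normalize // mass_rK => qK_le.
have : umutinfo (through r K) = mass r * (umutinfo (through r K) / mass r) by field; lra.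
nra.
Qed.

Lemma umutinfo_encoded_le (U W : finType) (s : U -> W -> R) (h : W -> X) x :
  (forall u w, 0 <= s u w) -> 0 <= x -> umutinfo s <= mass s * x ->
  umutinfo (through s (fun w => K (h w))) <= mass s * (x - psi x).
Proof.
move=> s_ge0 x0 s_le.
pose r u a := \big[Rplus/R0]_(w | h w == a) s u w.
have mass_r : mass r = mass s.
  by apply: eq_bigr => u _; rewrite /marg1 /rsum /r [RHS](partition_big h predT).
have -> : through s (fun w => K (h w)) = through r K.
  apply: functional_extensionality => u; apply: functional_extensionality => y.
  rewrite /through /rsum /r (partition_big h predT) //; apply: eq_bigr => a _.
  by rewrite sumR_mulr; apply: eq_bigr => w /eqP <-.
rewrite -mass_r; apply: umutinfo_channel_le => //.
  by move=> u a; apply: sumR_ge0.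
by rewrite mass_r; apply: Rle_trans (umutinfo_push_le s_ge0 h) s_le.
Qed.
End SingleUse.

Definition extend_channel (X Y W Z : finType) (K : X -> Y -> R) (c : W -> Z -> R)
  (g : W -> Z -> X) (w : W) (zy : Z * Y) : R := c w zy.1 * K (g w zy.1) zy.2.

Section FeedbackStep.
Variables (X Y U W Z : finType) (K : X -> Y -> R) (psi : R -> R).
Hypothesis K_channel : is_channel K.
Hypothesis psi_ge0 : forall t, 0 <= t -> 0 <= psi t.
Hypothesis psi_convex : convex_on_nonneg psi.
Hypothesis K_FI : forall t, 0 <= t -> FI_le K t (t - psi t).
Variables (p : U -> W -> R) (c : W -> Z -> R) (g : W -> Z -> X) (t : R).
Hypothesis p_ge0 : forall u w, 0 <= p u w.
Hypothesis p_mass : mass p = 1.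
Hypothesis c_channel : is_channel c.
Hypothesis p_le : mutinfo p <= t.

Let s z u w := p u w * c w z.
Let T z := mass (s z).

Lemma slice_ge0 z u w : 0 <= s z u w.
Proof. exact/Rmult_le_pos/channel_ge0. Qed.

Lemma mass_slices : rsum T = 1.
Proof.
rewrite -p_mass /rsum exchange_big; apply: eq_bigr => u _.
rewrite exchange_big; apply: eq_bigr => w _.
by rewrite /= -sumR_mull channel_sum1 // Rmult_1_r.
Qed.

Lemma mutinfo_extend_chain :
  mutinfo (through p (extend_channel K c g)) =
  mutinfo (through p c) + rsum (fun z => umutinfo (through (s z) (fun w => K (g w z)))).
Proof.
rewrite (mutinfo_chain (q := through p c)) => [|u [z y]|u z].
- congr (_ + _); apply: eq_bigr => z _; congr umutinfo.
  apply: functional_extensionality => u; apply: functional_extensionality => y.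
  by apply: eq_bigr => w _; rewrite /s /extend_channel /= Rmult_assoc.
- by apply: sumR_ge0 => w _; apply: Rmult_le_pos => //; apply: Rmult_le_pos; apply: channel_ge0.
- rewrite /through /rsum exchange_big; apply: eq_bigr => w _.
  by rewrite /extend_channel /= -sumR_mull -sumR_mull channel_sum1 // Rmult_1_r.
Qed.

Lemma mutinfo_extend_le :
  mutinfo (through p (extend_channel K c g)) <= t - psi (t - mutinfo (through p c)).
Proof.
set a := mutinfo (through p c).
have T_ge0 z : 0 <= T z := mass_ge0 (slice_ge0 z).
(* The budget of slice [z]: its share of [I(U;W)] plus the common slack; by [mutinfo_markov]
   the budgets average to [t - I(U;Z)]. *)
pose x z := umutinfo (s z) / T z + (t - mutinfo p).
have x_ge0 z : 0 <= x z.
  by have := Rmult_le_pos _ _ (umutinfo_ge0 (slice_ge0 z)) (Rinv_ge0 (T_ge0 z)); rewrite /x; lra.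
have Tx z : T z * x z = umutinfo (s z) + T z * (t - mutinfo p).
  case: (Req_dec (T z) 0) => [T0|T_neq0]; last by rewrite /x; field.
  by rewrite T0 umutinfo_mass0 //; [ring | apply: slice_ge0].
have sum_Tx : rsum (fun z => T z * x z) = t - a.
  rewrite /rsum; under eq_bigr do rewrite Tx.
  rewrite big_split /= -sumR_mulr -/(rsum T) mass_slices (mutinfo_markov p_ge0 c_channel) -/a.
  rewrite /rsum /s /=; lra.
have per_slice z : umutinfo (through (s z) (fun w => K (g w z))) <= T z * (x z - psi (x z)).
  apply: umutinfo_encoded_le => //; first exact: slice_ge0.
  have : 0 <= T z * (t - mutinfo p) by apply: Rmult_le_pos => //; lra.
  by rewrite Tx; lra.
have jensen_x := jensen psi_ge0 psi_convex T_ge0 x_ge0 mass_slices.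
rewrite sum_Tx in jensen_x.
have : rsum (fun z => umutinfo (through (s z) (fun w => K (g w z)))) +
       rsum (fun z => T z * psi (x z)) <= rsum (fun z => T z * x z).
  rewrite /rsum -big_split; apply: sumR_le => z _ /=.
  by have := per_slice z; rewrite Rmult_minus_distr_l; lra.
rewrite mutinfo_extend_chain -/a sum_Tx; lra.
Qed.
End FeedbackStep.

(** * Feedback encoders *)

Definition prefix_channel (X Y W : finType) (K : X -> Y -> R) (e : nat -> W -> seq Y -> X)
  (j : nat) (w : W) (z : j.-tuple Y) : R :=
  \big[Rmult/R1]_(i < j) K (e i w (take i z)) (tnth z i).

Section PrefixChannel.
Variables (X Y W : finType) (K : X -> Y -> R) (e : nat -> W -> seq Y -> X).
Hypothesis K_channel : is_channel K.

Lemma rcons_tuple_bij j : bijective (fun v : j.-tuple Y * Y => rcons_tuple v.1 v.2).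
Proof.
apply: inj_card_bij; last by rewrite card_prod !card_tuple expnSr.
by move=> [z1 y1] [z2 y2] /(congr1 val) /= /rcons_inj [/val_inj -> ->].
Qed.

Lemma prefix_channel_rcons j w (z : j.-tuple Y) y :
  prefix_channel K e w (rcons_tuple z y) = prefix_channel K e w z * K (e j w z) y.
Proof.
rewrite /prefix_channel big_ord_recr /=; congr (_ * K _ _).
- apply: eq_bigr => i _; have i_le : (i <= size z)%nat by rewrite size_tuple ltnW.
  by rewrite -cats1 takel_cat // (tnth_nth y) (tnth_nth y) /= nth_rcons size_tuple ltn_ord.
- by rewrite -cats1 take_size_cat ?size_tuple.
- by rewrite (tnth_nth y) /= nth_rcons size_tuple ltnn eqxx.
Qed.

Lemma sum_tuple0 (F : 0.-tuple Y -> R) : \big[Rplus/R0]_z F z = F [tuple].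
Proof.
rewrite (big_pred1 [tuple]) // => z /=.
by rewrite (tuple0 z); apply/esym/eqP.
Qed.

Lemma prefix_channel_is_channel j : is_channel (prefix_channel K e (j := j)).
Proof.
move=> w; split=> [z|].
  by apply: big_ind => [|*|i _]; [lra | nra | apply: channel_ge0].
elim: j => [|j IH].
  by rewrite /rsum sum_tuple0 /prefix_channel big_ord0.
rewrite /rsum (reindex (fun v => rcons_tuple v.1 v.2)) /=; last exact: onW_bij (rcons_tuple_bij j).
rewrite sumR_pair -[RHS]IH; apply: eq_bigr => z _.
under eq_bigr do rewrite prefix_channel_rcons.
by rewrite /= -sumR_mull channel_sum1 // Rmult_1_r.
Qed.
End PrefixChannel.

Lemma mutinfo_relabel (A B B' : finType) (h : B -> B') (q : A -> B -> R) (q' : A -> B' -> R) :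
  bijective h -> (forall a b, q' a (h b) = q a b) -> mutinfo q' = mutinfo q.
Proof.
move=> h_bij qq'; have h_onW := onW_bij xpredT h_bij.
have marg1_q' a : marg1 q' a = marg1 q a.
  by rewrite /marg1 /rsum (reindex h) //=; apply: eq_bigr => b _; apply: qq'.
rewrite !mutinfoE; apply: eq_bigr => a _; rewrite /rsum (reindex h) //=.
apply: eq_bigr => b _; rewrite qq' marg1_q'; congr (kl_term _ (_ * _)).
by apply: eq_bigr => a' _; apply: qq'.
Qed.

Lemma mutinfo_prefix_succ (X Y W U : finType) (K : X -> Y -> R) (e : nat -> W -> seq Y -> X)
  (p : U -> W -> R) j :
  mutinfo (through p (prefix_channel K e (j := j.+1))) =
  mutinfo (through p (extend_channel K (prefix_channel K e (j := j)) (fun w z => e j w z))).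
Proof.
apply: (mutinfo_relabel (h := fun v : j.-tuple Y * Y => rcons_tuple v.1 v.2)).
  exact: rcons_tuple_bij.
move=> u [z y]; apply: eq_bigr => w _.
by rewrite prefix_channel_rcons.
Qed.

Section FeedbackBound.
Variables (X Y W U : finType) (K : X -> Y -> R) (psi : R -> R) (e : nat -> W -> seq Y -> X).
Hypothesis K_channel : is_channel K.
Hypothesis psi_ge0 : forall t, 0 <= t -> 0 <= psi t.
Hypothesis psi_convex : convex_on_nonneg psi.
Hypothesis psi_mono : forall x y, 0 <= x -> x <= y -> psi x <= psi y.
Hypothesis K_FI : forall t, 0 <= t -> FI_le K t (t - psi t).
Variables (p : U -> W -> R) (t : R).
Hypothesis p_ge0 : forall u w, 0 <= p u w.
Hypothesis p_mass : mass p = 1.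
Hypotheses (t_ge0 : 0 <= t) (p_le : mutinfo p <= t).

Lemma mutinfo_prefix_le j :
  mutinfo (through p (prefix_channel K e (j := j))) <= t - iter j psi t.
Proof.
elim: j => [|j IH].
  have -> : through p (prefix_channel K e (j := 0)) = fun u z => marg1 p u * 1.
    apply: functional_extensionality => u; apply: functional_extensionality => z.
    by rewrite /through /rsum sumR_mulr; apply: eq_bigr => w _; rewrite /prefix_channel big_ord0.
  rewrite mutinfo_indep /=; first lra.
    by split; [move=> u; apply: marg1_ge0 | exact: p_mass].
  by split=> [_|]; [lra | rewrite /rsum sum_tuple0].
rewrite mutinfo_prefix_succ iterS.
apply: Rle_trans (mutinfo_extend_le K_channel psi_ge0 psi_convex K_FI _ p_ge0 p_mass
  (prefix_channel_is_channel e K_channel j) p_le) _.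
have iter_le : iter j psi t <= t - mutinfo (through p (prefix_channel K e (j := j))) by lra.
have := psi_mono (iter_ge0 j psi_ge0 t_ge0) iter_le; lra.
Qed.
End FeedbackBound.

Theorem corollary5 (X Y W : finType) (K : X -> Y -> R) (psi : R -> R)
  (n : nat) (f : 'I_n -> W -> seq Y -> X) :
  is_channel K ->
  (forall t, 0 <= t -> 0 <= psi t) ->
  convex_on_nonneg psi ->
  (forall t, 0 <= t -> FI_le K t (t - psi t)) ->
  (0 < n)%nat ->
  forall t, 0 <= t ->
    FI_le (feedback_channel (W:=W) K f) t (t - iter n psi t).
Proof.
move=> K_channel psi_ge0 psi_convex K_FI n_gt0 t t_ge0 _ [U [p [[p_ge0 p_sum] [p_le ->]]]].
case: n n_gt0 f => // m _ f.
have p_mass : mass p = 1 by rewrite -p_sum /rsum sumR_pair.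
have [w0 _] : exists w0 : W, true.
  case: (pickP (@predT W)) => [w0 _|W_empty]; first by exists w0.
  suff : mass p = 0 by lra.
  by apply: big1 => u _; apply: big1 => w _; have := W_empty w.
have psi0 : psi 0 = 0.
  have := K_FI 0 (Rle_refl 0) 0 (FI_set0 (f ord0 w0 [::]) K_channel (Rle_refl 0)).
  have := psi_ge0 0 (Rle_refl 0); lra.
have -> : feedback_channel K f = prefix_channel K (fun j => f (inord j)) (j := m.+1).
  apply: functional_extensionality => w; apply: functional_extensionality => z.
  by apply: eq_bigr => i _; rewrite inord_val.
apply: mutinfo_prefix_le => //; first exact: convex_nondecreasing.
by move=> u w; apply: (p_ge0 (u, w)).
Qed.
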